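(* Let $P$ be any poset on $\{1,2,\ldots,n\}$. Every weak $P$-partition $f$ has a unique expression as (i) $f=\sum_{k=1}^{\max(f)}\chi_{I_k}$ for a multiset $I_1\supseteq I_2\supseteq\cdots\supseteq I_{\max(f)}$ of nested nonempty order ideals of $P$; and also a unique expression as (ii) $f=\sum_{i=1}^{\nu(f)}\chi_{J_i}$ for a multiset $\{J_1,\ldots,J_{\nu(f)}\}$ of nonempty connected order ideals of $P$ which pairwise intersect trivially.
   Context: All posets are finite. A weak $P$-partition is a map $f:\{1,\ldots,n\}\to\mathbb{N}$ with $f(i)\ge f(j)$ whenever $i<_Pj$; $\max(f)$ is its maximum value. For $A\subseteq\{1,\ldots,n\}$, $\chi_A\in\{0,1\}^n$ is its indicator vector. An order ideal is a downward-closed subset of $P$; a connected order ideal is a nonempty order ideal whose induced Hasse diagram is connected. Two connected order ideals intersect trivially if they are disjoint or one contains the other. $\nu(f)$ denotes the number of terms (with multiplicity) in the expression of part (ii). *)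

From mathcomp Require Import all_boot.
Set Implicit Arguments. Unset Strict Implicit. Unset Printing Implicit Defensive.

(* A poset on {1,...,n} is represented by its (non-strict) order relation
   le on 'I_n (elements 0..n-1 standing for 1..n). *)
Definition is_poset (n : nat) (le : rel 'I_n) : Prop :=
  [/\ reflexive le, antisymmetric le & transitive le].

Definition plt n (le : rel 'I_n) : rel 'I_n := fun i j => (i != j) && le i j.

Definition pcovers n (le : rel 'I_n) : rel 'I_n :=
  fun i j => plt le i j && [forall k, ~~ (plt le i k && plt le k j)].

Definition weak_P_partition n (le : rel 'I_n) (f : 'I_n -> nat) : Prop :=
  forall i j, plt le i j -> f j <= f i.

Definition fmax n (f : 'I_n -> nat) : nat := \max_(i : 'I_n) f i.

Definition order_ideal n (le : rel 'I_n) (I : {set 'I_n}) : Prop :=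
  forall x y, y \in I -> le x y -> x \in I.

Definition hasse_on n (le : rel 'I_n) (I : {set 'I_n}) : rel 'I_n :=
  fun x y => [&& x \in I, y \in I & pcovers le x y || pcovers le y x].

Definition connected_order_ideal n (le : rel 'I_n) (I : {set 'I_n}) : Prop :=
  [/\ I != set0, order_ideal le I &
      forall x y, x \in I -> y \in I -> connect (hasse_on le I) x y].

Definition intersect_trivially n (I J : {set 'I_n}) : bool :=
  [disjoint I & J] || (I \subset J) || (J \subset I).

Definition chi_sum n (s : seq {set 'I_n}) (i : 'I_n) : nat :=
  \sum_(J <- s) (i \in J).

Definition nested_expr n (le : rel 'I_n) (f : 'I_n -> nat)
    (s : seq {set 'I_n}) : Prop :=
  [/\ size s = fmax f,
      forall k, k < size s -> nth set0 s k != set0 /\ order_ideal le (nth set0 s k),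
      forall k, k.+1 < size s -> nth set0 s k.+1 \subset nth set0 s k
    & forall i, f i = chi_sum s i].

(* (ii): multiset (seq up to permutation) of nonempty connected order ideals
   pairwise intersecting trivially *)
Definition connected_expr n (le : rel 'I_n) (f : 'I_n -> nat)
    (s : seq {set 'I_n}) : Prop :=
  [/\ forall J, J \in s -> connected_order_ideal le J,
      forall k l, k < size s -> l < size s -> k != l ->
        intersect_trivially (nth set0 s k) (nth set0 s l)
    & forall i, f i = chi_sum s i].

From mathcomp Require Import all_boot zify.
Set Implicit Arguments. Unset Strict Implicit. Unset Printing Implicit Defensive.

(* (i) In a nested chain, the members containing i form an initial segment, so
   i lies in the k-th member iff k < f i: the chain must be the sequence of
   level ideals {i | f i > k}.
   (ii) Existence: take the connected components of the Hasse diagram of each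
   level ideal; components of nested level ideals are nested or disjoint.
   Uniqueness: in any such expression, let M be a largest member containing a
   point x of the support {f > 0}. It is closed downwards, and also upwards
   along covers inside the support, since a member containing the upper element
   contains the lower one, hence meets M and so lies inside it. Thus M is the
   component of x in the support; removing these components leaves an
   expression of f - 1, and induction on max f concludes. *)

Lemma antitone_bool_sumE (b : nat -> bool) L k :
  (forall j l, j <= l -> b l -> b j) -> k < L ->
  b k = (k < \sum_(0 <= j < L) b j).
Proof.
move=> b_anti ltkL; rewrite (big_cat_nat (leq0n k) (ltnW ltkL)) /=.
have [bk | nbk] := boolP (b k).
- have -> : \sum_(0 <= j < k) b j = k.
    rewrite -[RHS](subn0 k) -[k - 0]muln1 -sum_nat_const_nat.
    by apply: eq_big_nat => j /andP[_ ltjk]; rewrite (b_anti j k) // ltnW.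
  by rewrite big_ltn // bk addnS ltnS leq_addr.
- have -> : \sum_(k <= j < L) b j = 0.
    rewrite big_nat_cond big1 // => j /andP[/andP[lekj _] _].
    by case bj: (b j); rewrite // (b_anti k j lekj bj) in nbk.
  have : \sum_(0 <= j < k) b j <= \sum_(0 <= j < k) 1 by apply: leq_sum => j _; apply: leq_b1.
  by rewrite sum_nat_const_nat muln1 subn0 addn0 ltnNge => ->.
Qed.

Lemma connect_restrict (T : finType) (e : rel T) (C : {pred T}) x y :
  {in C, forall a b, e a b -> b \in C} -> x \in C -> connect e x y ->
  connect [rel a b | [&& a \in C, b \in C & e a b]] x y.
Proof.
move=> closedC + /connectP[p + ->]; elim: p x => [|z p IHp] x Cx /=.
  by move=> _; apply: connect0.
case/andP=> exz pz; have Cz := closedC x Cx z exz.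
by apply: connect_trans (IHp z Cz pz); apply: connect1; rewrite /= Cx Cz.
Qed.

Section ChiSum.

Variable n : nat.
Implicit Types (s t : seq {set 'I_n}) (i : 'I_n).

Lemma chi_sumE s i : chi_sum s i = count (fun J : {set 'I_n} => i \in J) s.
Proof. by rewrite -sum1_count big_mkcond. Qed.

Lemma chi_sum_gt0P s i : reflect (exists2 J, J \in s & i \in J) (0 < chi_sum s i).
Proof. by rewrite chi_sumE -has_count; apply: hasP. Qed.

Lemma chi_sum_cat s t i : chi_sum (s ++ t) i = chi_sum s i + chi_sum t i.
Proof. exact: big_cat. Qed.

Lemma perm_chi_sum s t i : perm_eq s t -> chi_sum s i = chi_sum t i.
Proof. by move=> pst; apply: perm_big. Qed.

Lemma chi_sum_partition (P : {set {set 'I_n}}) (S : {set 'I_n}) i :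
  partition P S -> chi_sum (enum P) i = (i \in S).
Proof.
case/and3P=> /eqP covP trivP _; rewrite /chi_sum big_enum /=.
have [iS | niS] := boolP (i \in S).
- have iP : i \in cover P by rewrite covP.
  rewrite (bigD1 (pblock P i)) ?pblock_mem //= mem_pblock iP big1 // => J /andP[JP nJ].
  apply/eqP; rewrite eqb0; apply: contra nJ => iJ; by rewrite (def_pblock trivP JP iJ).
- rewrite big1 // => J JP; apply/eqP; rewrite eqb0; apply: contra niS => iJ.
  by rewrite -covP; apply/bigcupP; exists J.
Qed.

Lemma chi_sum_flatten (ss : seq (seq {set 'I_n})) i :
  chi_sum (flatten ss) i = \sum_(s <- ss) chi_sum s i.
Proof. exact: big_flatten. Qed.

End ChiSum.

Section Levels.

Variables (n : nat) (f : 'I_n -> nat).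

Definition level k := [set i | k < f i].

Definition level_ideals := mkseq level (fmax f).

Lemma level_ideal (le : rel 'I_n) k : weak_P_partition le f -> order_ideal le (level k).
Proof.
move=> wf x y; rewrite !inE => ltky lexy; have [-> // | nexy] := eqVneq x y.
by apply: leq_trans ltky _; apply: wf; rewrite /plt nexy.
Qed.

Lemma level_neq0 k : k < fmax f -> level k != set0.
Proof.
rewrite ltnNge; apply: contra => /eqP lev0; apply/bigmax_leqP => i _.
by rewrite leqNgt; have := in_set0 i; rewrite -lev0 inE => ->.
Qed.

Lemma level_sub k l : k <= l -> level l \subset level k.
Proof. by move=> lekl; apply/subsetP=> i; rewrite !inE; apply: leq_ltn_trans. Qed.

Lemma chi_sum_level_ideals i : chi_sum level_ideals i = f i.
Proof.
rewrite chi_sumE count_map -size_filter.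
rewrite (eq_filter (a2 := fun k => k < 0 + f i)) => [|k]; last by rewrite /= inE.
by rewrite filter_iota_ltn ?size_iota // leq_bigmax.
Qed.

Lemma nested_expr_level_ideals (le : rel 'I_n) :
  weak_P_partition le f -> nested_expr le f level_ideals.
Proof.
move=> wf; split=> [|k|k|i]; rewrite ?size_mkseq.
- by [].
- by move=> ltkM; rewrite nth_mkseq //; split; [exact: level_neq0 | exact: level_ideal].
- by move=> ltkM; rewrite !nth_mkseq //; [apply: level_sub | apply: ltnW].
- exact/esym/chi_sum_level_ideals.
Qed.

Lemma nested_expr_uniq (le : rel 'I_n) t : nested_expr le f t -> t = level_ideals.
Proof.
case=> size_t _ nested chi_t; apply: (eq_from_nth (x0 := set0)); first by rewrite size_mkseq.
move=> k ltkt; rewrite nth_mkseq -?size_t //; apply/setP=> i.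
rewrite inE chi_t /chi_sum (big_nth set0).
have nested_all : {homo nth set0 t : j l / j <= l >-> l \subset j}.
  apply: homo_leq => [A | B A C sBA sCB | j]; first exact: subxx.
    exact: subset_trans sCB sBA.
  by have [/nested // | leqtj] := ltnP j.+1 (size t); rewrite nth_default ?sub0set.
by apply: antitone_bool_sumE => // j l lejl; apply: subsetP; apply: nested_all.
Qed.

End Levels.

Lemma fmax_pred n (f : 'I_n -> nat) : fmax (fun i => (f i).-1) = (fmax f).-1.
Proof. by rewrite /fmax (big_morph predn (id1 := 0) (op1 := maxn)) // => x y; lia. Qed.

Lemma level_ideals_pred n (f : 'I_n -> nat) : 0 < fmax f ->
  level_ideals f = level f 0 :: level_ideals (fun i => (f i).-1).
Proof.
rewrite /level_ideals fmax_pred; case: (fmax f) => // M _.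
rewrite /mkseq /= -[iota 1 M]/(iota (1 + 0) M) iotaDl -map_comp; congr (_ :: _).
by apply: eq_map => k; apply/setP => i; rewrite !inE /=; lia.
Qed.

Section Hasse.

Variables (n : nat) (le : rel 'I_n).
Implicit Types (S I K J : {set 'I_n}) (x y : 'I_n).

Lemma plt_le x y : plt le x y -> le x y.
Proof. by case/andP. Qed.

Lemma hasse_on_sym S : symmetric (hasse_on le S).
Proof. by move=> x y; rewrite /hasse_on andbCA orbC. Qed.

Lemma hasse_on_connect_sym S : connect_sym (hasse_on le S).
Proof. exact/sym_connect_sym/hasse_on_sym. Qed.

Definition hasse_comp S x := [set y in S | connect (hasse_on le S) x y].

Definition hasse_comps S := equivalence_partition (connect (hasse_on le S)) S.

Lemma hasse_comps_partition S : partition (hasse_comps S) S.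
Proof.
apply: equivalence_partitionP => x y z _ _ _; split=> [|cxy]; first exact: connect0.
by apply/idP/idP; apply: connect_trans; rewrite // hasse_on_connect_sym.
Qed.

Lemma hasse_compsP S J :
  reflect (exists2 x, x \in S & J = hasse_comp S x) (J \in hasse_comps S).
Proof. exact: imsetP. Qed.

Lemma mem_hasse_comp S x : x \in S -> x \in hasse_comp S x.
Proof. by move=> xS; rewrite inE xS connect0. Qed.

Lemma hasse_comp_sub S x : hasse_comp S x \subset S.
Proof. by apply/subsetP=> y; rewrite inE => /andP[]. Qed.

Lemma hasse_comp_closed S x :
  {in hasse_comp S x, forall a b, hasse_on le S a b -> b \in hasse_comp S x}.
Proof.
move=> a; rewrite !inE => /andP[_ cxa] b hab.
by rewrite inE (connect_trans cxa (connect1 hab)) andbT; case/and3P: hab => _ ->.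
Qed.

Lemma hasse_comp_connect S x :
  {in hasse_comp S x &, forall a b, connect (hasse_on le (hasse_comp S x)) a b}.
Proof.
set C := hasse_comp S x => a b aC bC.
have cab : connect (hasse_on le S) a b.
  move: aC bC; rewrite !inE => /andP[_ cxa] /andP[_ cxb].
  by apply: connect_trans cxb; rewrite hasse_on_connect_sym.
apply: connect_sub (connect_restrict (hasse_comp_closed (x := x)) aC cab) => u v.
by case/and3P=> uC vC /and3P[_ _ cuv]; apply: connect1; rewrite /hasse_on uC vC.
Qed.

Lemma sub_hasse_comp S K x k :
  K \subset S -> {in K &, forall a b, connect (hasse_on le K) a b} ->
  k \in K -> k \in hasse_comp S x -> K \subset hasse_comp S x.
Proof.
move=> KS connK kK; rewrite inE => /andP[_ cxk]; apply/subsetP=> b bK.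
rewrite inE (subsetP KS _ bK) (connect_trans cxk) //.
apply: connect_sub (connK _ _ kK bK) => u v /and3P[uK vK cuv]; apply: connect1.
by rewrite /hasse_on (subsetP KS _ uK) (subsetP KS _ vK).
Qed.

Lemma intersect_triviallyC I J : intersect_trivially I J = intersect_trivially J I.
Proof. by rewrite /intersect_trivially disjoint_sym orbAC -!orbA. Qed.

Lemma intersect_trivially_hasse_comp S J x :
  connected_order_ideal le J -> J \subset S -> intersect_trivially (hasse_comp S x) J.
Proof.
case=> _ _ connJ JS; rewrite /intersect_trivially.
have [//|] := boolP [disjoint hasse_comp S x & J].
rewrite -setI_eq0 => /set0Pn[k]; rewrite inE => /andP[kC kJ].
by rewrite (sub_hasse_comp JS connJ kJ kC) orbT.
Qed.

Hypothesis le_poset : is_poset le.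

Lemma plt_trans : transitive (plt le).
Proof.
case: le_poset => _ anti trans y x z /andP[nexy lexy] /andP[neyz leyz].
rewrite /plt (trans _ _ _ lexy leyz) andbT; apply: contraNneq nexy => exz.
by apply/eqP/anti; rewrite lexy -exz in leyz *.
Qed.

Lemma connect_hasse_le I x y :
  order_ideal le I -> y \in I -> le x y -> connect (hasse_on le I) x y.
Proof.
move=> idI yI; case: le_poset => refl _ trans.
pose U a := [set w | plt le a w && le w y].
have U_proper a b : plt le a b -> le b y -> U b \proper U a.
  move=> ltab leby; apply/properP; split.
    by apply/subsetP=> w; rewrite !inE => /andP[ltbw ->]; rewrite (plt_trans ltab ltbw).
  by exists b; rewrite !inE ?ltab ?leby // /plt eqxx.
have [N] := ubnP #|U x|; elim: N x => // N IH x ltUN lexy.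
have [-> | nexy] := eqVneq x y; first exact: connect0.
have Uxy : y \in U x by rewrite inE /plt nexy lexy refl.
(* Choosing z in U x with U z largest forces z to cover x. *)
have [z /[!inE] /andP[ltxz lezy] zmax] :=
  @arg_maxnP _ y (fun w => w \in U x) (fun w => #|U w|) Uxy.
have covxz : pcovers le x z.
  rewrite /pcovers ltxz; apply/forallP => k; apply/negP => /andP[ltxk ltkz].
  have Uxk : k \in U x by rewrite inE ltxk (trans _ _ _ (plt_le ltkz) lezy).
  by have := zmax k Uxk; rewrite /= leqNgt (proper_card (U_proper _ _ ltkz lezy)).
apply: (connect_trans (y := z)).
  by apply: connect1; rewrite /hasse_on (idI _ _ yI lexy) (idI _ _ yI lezy) covxz.
apply: (IH z _ lezy); apply: leq_trans (proper_card (U_proper _ _ ltxz lezy)) _.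
by rewrite -ltnS.
Qed.

Lemma connected_order_ideal_hasse_comp S x :
  order_ideal le S -> x \in S -> connected_order_ideal le (hasse_comp S x).
Proof.
move=> idS xS; split.
- by apply/set0Pn; exists x; apply: mem_hasse_comp.
- move=> a b; rewrite !inE => /andP[bS cxb] leab; rewrite (idS _ _ bS leab) /=.
  by apply: connect_trans cxb _; rewrite hasse_on_connect_sym connect_hasse_le.
- exact: hasse_comp_connect.
Qed.

End Hasse.

Section ConnectedDecomposition.

Variables (n : nat) (le : rel 'I_n).

(* Quantifying over members rather than indices makes the condition stable
   under passing to a sub-multiset. *)
Definition connected_expr_in (f : 'I_n -> nat) (s : seq {set 'I_n}) :=
  [/\ {in s, forall J, connected_order_ideal le J},
      {in s &, forall I J, intersect_trivially I J}
    & forall i, f i = chi_sum s i].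

Lemma connected_exprP f s :
  connected_expr le f s <-> connected_expr_in f s.
Proof.
split=> -[conn_s triv_s chi_s]; split=> //.
- move=> I J /(nthP set0)[k lt_ks <-] /(nthP set0)[l lt_ls <-].
  have [-> | nekl] := eqVneq k l; last exact: triv_s.
  by rewrite /intersect_trivially subxx !orbT.
- by move=> k l lt_ks lt_ls _; apply: triv_s; apply: mem_nth.
Qed.

Definition connected_decomp (f : 'I_n -> nat) :=
  flatten [seq enum (hasse_comps le A) | A <- level_ideals f].

Lemma connected_decomp_pred f : 0 < fmax f ->
  connected_decomp f =
    enum (hasse_comps le (level f 0)) ++ connected_decomp (fun i => (f i).-1).
Proof. by move=> fmax_gt0; rewrite /connected_decomp level_ideals_pred. Qed.

Lemma mem_connected_decomp f J : J \in connected_decomp f ->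
  exists k x, x \in level f k /\ J = hasse_comp le (level f k) x.
Proof.
case/flatten_mapP => A /mapP[k _ ->]; rewrite mem_enum => /hasse_compsP[x xA ->].
by exists k, x.
Qed.

Lemma connected_decomp_expr f :
  is_poset le -> weak_P_partition le f -> connected_expr_in f (connected_decomp f).
Proof.
move=> le_poset wf; have conn_comp k x : x \in level f k ->
    connected_order_ideal le (hasse_comp le (level f k) x).
  by apply: connected_order_ideal_hasse_comp => //; apply: level_ideal.
split.
- by move=> J /mem_connected_decomp[k [x [xk ->]]]; apply: conn_comp.
- move=> I J /mem_connected_decomp[k [x [xk ->]]] /mem_connected_decomp[l [y [yl ->]]].
  wlog lekl : k l x y xk yl / k <= l.
    move=> wlog; have [/wlog -> // | /ltnW ltlk] := leqP k l.
    by rewrite intersect_triviallyC; apply: wlog.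
  apply: intersect_trivially_hasse_comp; first exact: conn_comp.
  exact: subset_trans (hasse_comp_sub _ _ _) (level_sub _ lekl).
- move=> i; rewrite chi_sum_flatten big_map.
  under eq_bigr do rewrite (chi_sum_partition _ (hasse_comps_partition _ _)).
  exact/esym/chi_sum_level_ideals.
Qed.

Lemma sub_hasse_compport_mem f t x : connected_expr_in f t ->
  x \in level f 0 -> hasse_comp le (level f 0) x \in t.
Proof.
case=> conn_t triv_t chi_t; set S := level f 0 => xS.
have in_t_sub J : J \in t -> J \subset S.
  by move=> Jt; apply/subsetP=> b bJ; rewrite inE chi_t; apply/chi_sum_gt0P; exists J.
move: (xS); rewrite inE chi_t => /chi_sum_gt0P[J Jt xJ].
have Jx : (J \in t) && (x \in J) by rewrite Jt xJ.
have [M /andP[Mt xM] Mmax] :=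
  @arg_maxnP _ J (fun K => (K \in t) && (x \in K)) (fun K => #|K|) Jx.
have [_ Mid Mconn] := conn_t M Mt.
have M_closed a b : hasse_on le S a b -> a \in M -> b \in M.
  case/and3P=> _ bS /orP[/andP[/plt_le leab _] | /andP[/plt_le leba _]] aM; last first.
    exact: Mid leba.
  move: bS; rewrite inE chi_t => /chi_sum_gt0P[K Kt bK].
  have [_ Kid _] := conn_t K Kt; have aK := Kid a b bK leab.
  case/orP: (triv_t M K Mt Kt) => [/orP[disMK | MK] | /subsetP KM]; last exact: KM.
    by rewrite (disjointFr disMK aM) in aK.
  suff /eqP -> : M == K by [].
  by rewrite eqEcard MK; apply: Mmax; rewrite Kt (subsetP MK).
have MC := sub_hasse_comp (in_t_sub M Mt) Mconn xM (mem_hasse_comp _ xS).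
have CM : hasse_comp le S x \subset M.
  apply/subsetP=> y; rewrite inE => /andP[_ cxy].
  by rewrite -(closed_connect (intro_closed (hasse_on_connect_sym _ _) M_closed) cxy).
by have /eqP -> : hasse_comp le S x == M by rewrite eqEsubset CM MC.
Qed.

Lemma connected_expr_perm_decomp f t :
  connected_expr_in f t -> perm_eq t (connected_decomp f).
Proof.
move Em : (fmax f) => m; elim: m f t Em => [|m IH] f t Em ft.
  rewrite /connected_decomp /level_ideals Em.
  case: t ft => // J t [conn_t _ chi_t].
  have [/set0Pn[i iJ] _ _] := conn_t J (mem_head J t).
  have : 0 < f i by rewrite chi_t; apply/chi_sum_gt0P; exists J; rewrite ?mem_head.
  by rewrite lt0n -leqn0 -Em leq_bigmax.
have [t' perm_t] : exists t', perm_eq t (enum (hasse_comps le (level f 0)) ++ t').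
  have comps_sub_t : {subset enum (hasse_comps le (level f 0)) <= t}.
    by move=> J; rewrite mem_enum => /hasse_compsP[x xS ->]; apply: sub_hasse_compport_mem.
  have [s /perm_to_subseq[t' perm_t] perm_s] :=
    (count_subseqP _ _).1 (leq_uniq_count (enum_uniq _) comps_sub_t).
  by exists t'; rewrite (perm_trans perm_t) // perm_cat2r perm_sym.
rewrite connected_decomp_pred ?Em // (perm_trans perm_t) // perm_cat2l.
case: ft => conn_t triv_t chi_t.
have sub_t : {subset t' <= t} by move=> J Jt'; rewrite (perm_mem perm_t) mem_cat Jt' orbT.
apply: IH; first by rewrite fmax_pred Em.
split=> [J /sub_t | I J /sub_t It /sub_t Jt | i]; [exact: conn_t | exact: triv_t |].
have := chi_t i; rewrite (perm_chi_sum _ perm_t) chi_sum_cat.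
by rewrite (chi_sum_partition _ (hasse_comps_partition _ _)) inE; lia.
Qed.

End ConnectedDecomposition.

Theorem proposition2p5 (n : nat) (le : rel 'I_n) (f : 'I_n -> nat) :
  is_poset le -> weak_P_partition le f ->
  (exists s, nested_expr le f s /\
     forall t, nested_expr le f t -> t = s) /\
  (exists s, connected_expr le f s /\
     forall t, connected_expr le f t -> perm_eq t s).
Proof.
move=> le_poset wf; split.
- exists (level_ideals f); split; first exact: nested_expr_level_ideals.
  exact: nested_expr_uniq.
- exists (connected_decomp le f); split.
    exact/connected_exprP/connected_decomp_expr.
  by move=> t /connected_exprP; apply: connected_expr_perm_decomp.
Qed.
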